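(* Let $X$ be a complete median space of finite rank that is lineal, i.e. there exist $\xi,\eta\in\overline X$ with $X\subseteq I(\xi,\eta)$. Then every isometric action of a group on $X$ is Roller elementary.
   Context: A median space is a metric space $(X,d)$ in which for all $x,y,z$ the set $I(x,y)\cap I(y,z)\cap I(z,x)$ is a single point, where $I(x,y)=\{z:d(x,z)+d(z,y)=d(x,y)\}$; convex sets contain $I(x,y)$ whenever they contain $x,y$. A halfspace is a nonempty proper convex $\mathfrak h\subseteq X$ with convex complement; $\mathscr H$ is the set of halfspaces; rank is the maximal size of a set of pairwise transverse halfspaces. With $\sigma_x=\{\mathfrak h:x\in\mathfrak h\}$, $\mathscr H(x|y)=\sigma_y\setminus\sigma_x$ and ultrafilters the maximal sets of pairwise intersecting halfspaces, there is a canonical isometry-invariant measure $\widehat\nu$ on a $\sigma$-algebra $\widehat{\mathscr B}$ on $\mathscr H$ with $\widehat\nu(\mathscr H(x|y))=d(x,y)$. The Roller compactification $\overline X$ is the set of ultrafilters $\sigma$ with $\sigma\triangle\sigma_x\in\widehat{\mathscr B}$ modulo null symmetric difference, with median $m(\sigma_1,\sigma_2,\sigma_3)=(\sigma_1\cap\sigma_2)\cup(\sigma_2\cap\sigma_3)\cup(\sigma_3\cap\sigma_1)$; it is a compact median algebra containing $X$ (via $x\mapsto\sigma_x$) on which isometries of $X$ act. In $\overline X$, the interval is $I(\xi,\eta)=\{\zeta\in\overline X: m(\xi,\eta,\zeta)=\zeta\}$. An isometric action of $\Gamma$ on $X$ is Roller elementary if $\Gamma$ has a finite orbit in $\overline X$.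 *)

From HB Require Import structures.
From mathcomp Require Import all_boot all_order all_algebra.
From mathcomp Require Import all_classical all_reals.
From mathcomp Require Import ereal measure.
Set Implicit Arguments. Unset Strict Implicit. Unset Printing Implicit Defensive.
Import Order.TTheory GRing.Theory Num.Theory.
Local Open Scope classical_set_scope.
Local Open Scope ring_scope.

Section MedianDefs.
Context {R : realType} {X : Type} (d : X -> X -> R).

Definition is_metric : Prop :=
  (forall x y, d x y = 0 <-> x = y) /\
  (forall x y, d x y = d y x) /\
  (forall x y z, d x z <= d x y + d y z).

Definition complete_metric : Prop :=
  forall u : nat -> X,
    (forall e : R, 0 < e -> exists N, forall m n, (N <= m)%N -> (N <= n)%N -> d (u m) (u n) < e) ->
    exists l, forall e : R, 0 < e -> exists N, forall n, (N <= n)%N -> d (u n) l < e.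

Definition mI (x y : X) : set X := [set z | d x z + d z y = d x y].

Definition is_median_space : Prop :=
  is_metric /\
  forall x y z, exists! m, mI x y m /\ mI y z m /\ mI z x m.

Definition convex (C : set X) : Prop :=
  forall x y, C x -> C y -> mI x y `<=` C.

Definition halfspace (h : set X) : Prop :=
  h !=set0 /\ h != setT /\ convex h /\ convex (~` h).

Definition transverse (h k : set X) : Prop :=
  (h `&` k) !=set0 /\ (h `&` ~` k) !=set0 /\ (~` h `&` k) !=set0 /\ (~` h `&` ~` k) !=set0.

Definition finite_rank : Prop :=
  exists n : nat, forall (m : nat) (f : 'I_m -> set X),
    (forall i, halfspace (f i)) ->
    (forall i j, i != j -> transverse (f i) (f j)) -> (m <= n)%N.

Definition Hs : set (set X) := halfspace.
Definition sigma_pt (x : X) : set (set X) := [set h | halfspace h /\ h x].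
Definition Hxy (x y : X) : set (set X) := sigma_pt y `\` sigma_pt x.

Definition pairwise_intersecting (s : set (set X)) : Prop :=
  s `<=` Hs /\ forall h k, s h -> s k -> (h `&` k) !=set0.
Definition ultrafilter (s : set (set X)) : Prop :=
  pairwise_intersecting s /\
  forall t, pairwise_intersecting t -> s `<=` t -> t = s.

Definition Hgen : set (set (set X)) := [set E | exists x y, E = Hxy x y].

Definition HB := g_sigma_algebraType Hgen.

Definition isometry (phi : X -> X) : Prop :=
  bijective phi /\ forall x y, d (phi x) (phi y) = d x y.

Definition image_hs (phi : X -> X) (E : set (set X)) : set (set X) :=
  [set phi @` h | h in E].

Definition canonical_measure (nu : {measure set HB -> \bar R}) : Prop :=
  (forall x y, nu (Hxy x y : set HB) = (d x y)%:E) /\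
  (forall phi, isometry phi -> forall E : set HB, measurable E ->
     nu (image_hs phi E : set HB) = nu E).

(** the extended sigma-algebra B^ and nu^-null sets:
    E in B^ iff E ∩ H(x|y) in B for all x,y;
    nu^(E) = sup over finite F ⊆ X of nu(E ∩ ⋃_{x,y∈F} H(x|y)),
    so E is nu^-null iff nu(E ∩ H(x|y)) = 0 for all x, y. *)
Definition Bhat (E : set (set X)) : Prop :=
  forall x y, measurable (E `&` Hxy x y : set HB).
Definition nuhat_null (nu : {measure set HB -> \bar R}) (E : set (set X)) : Prop :=
  forall x y, nu (E `&` Hxy x y : set HB) = 0%E.

Definition symdiff (A B : set (set X)) : set (set X) := (A `\` B) `|` (B `\` A).

(** points of the Roller compactification (representatives) *)
Definition roller_point (s : set (set X)) : Prop :=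
  ultrafilter s /\ exists x, Bhat (symdiff s (sigma_pt x)).

Definition roller_eq (nu : {measure set HB -> \bar R}) (s t : set (set X)) : Prop :=
  nuhat_null nu (symdiff s t).

Definition median3 (s1 s2 s3 : set (set X)) : set (set X) :=
  (s1 `&` s2) `|` (s2 `&` s3) `|` (s3 `&` s1).

Definition roller_interval (nu : {measure set HB -> \bar R}) (xi eta zeta : set (set X)) : Prop :=
  roller_point zeta /\ roller_eq nu (median3 xi eta zeta) zeta.

Definition lineal (nu : {measure set HB -> \bar R}) : Prop :=
  exists xi eta, roller_point xi /\ roller_point eta /\
    forall x, roller_interval nu xi eta (sigma_pt x).

(** Roller elementary: some point of the Roller compactification has a finite
    orbit, i.e. its orbit meets only finitely many classes *)
Definition roller_elementary (nu : {measure set HB -> \bar R})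
  {G : Type} (act : G -> X -> X) : Prop :=
  exists s, roller_point s /\
    exists l : seq (set (set X)), forall g, exists2 t, t \in l & roller_eq nu (image_hs (act g) s) t.

End MedianDefs.

Definition is_group {G : Type} (mul : G -> G -> G) (e : G) (inv : G -> G) : Prop :=
  (forall a b c, mul a (mul b c) = mul (mul a b) c) /\
  (forall a, mul e a = a) /\ (forall a, mul (inv a) a = e).

Definition isometric_action {R : realType} {X G : Type} (d : X -> X -> R)
  (mul : G -> G -> G) (e : G) (act : G -> X -> X) : Prop :=
  (forall x, act e x = x) /\
  (forall g h x, act (mul g h) x = act g (act h x)) /\
  (forall g x y, d (act g x) (act g y) = d x y).

(* Let xi, eta be Roller points with X in I(xi, eta).  Testing this at the two endpoints
   of a gap H(a|b) shows that almost every halfspace lies in exactly one of xi, eta, and the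
   same holds for every pair of translates (g xi, g eta).  If g_1 xi, ..., g_K xi are pairwise
   distinct Roller points, any two of them are separated by a halfspace h at which all these
   pairs are opposite; record the sign vector l |-> [h in g_l xi] up to negation.  Two such
   halfspaces with different classes are transverse: some g_l xi contains both or neither,
   another contains exactly one, and the opposite ultrafilters g_l eta provide the missing
   quadrants.  So at most rank X = N classes occur, and as they separate the indices,
   K <= 2^N.  A maximal family of pairwise distinct translates then covers the orbit of xi. *)

From Pilot Require Import Defs.
From HB Require Import structures.
From mathcomp Require Import all_boot all_order all_algebra.
From mathcomp Require Import all_classical all_reals.
From mathcomp Require Import ereal measure.
Local Open Scope classical_set_scope.
Local Open Scope ring_scope.
Import Order.TTheory GRing.Theory Num.Theory.
Set Implicit Arguments. Unset Strict Implicit. Unset Printing Implicit Defensive.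

(* Defs.isometry is shadowed by the [isometry] of mathcomp's sesquilinear.v. *)
Local Notation isometry := Defs.isometry.

Section Halfspaces.
Context {R : realType} {X : Type} (d : X -> X -> R).

Lemma halfspaceC (h : set X) : halfspace d h -> halfspace d (~` h).
Proof.
case=> [[x hx] [hT [ch cCh]]]; split; [|split; [|by rewrite setCK]].
- by apply/set0P; apply: contra_neq hT => hC0; rewrite -(setCK h) hC0 setC0.
- by apply/eqP => hCT; have /(_ hx) : (~` h) x by rewrite hCT.
Qed.

Lemma convex_preimage (phi : X -> X) (C : set X) :
  (forall x y, d (phi x) (phi y) = d x y) -> convex d C -> convex d (phi @^-1` C).
Proof. by move=> iso cC x y Cx Cy z xzy; apply: (cC _ _ Cx Cy); rewrite /mI /= !iso. Qed.

Lemma halfspace_preimage (phi : X -> X) (h : set X) :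
  isometry d phi -> halfspace d h -> halfspace d (phi @^-1` h).
Proof.
case=> -[psi phiK psiK] iso [[y hy] [hT [ch cCh]]]; split.
  by exists (psi y); rewrite /= psiK.
split; last by split; [|rewrite preimage_setC]; exact: convex_preimage.
have phipsi : phi \o psi = id by apply/funext => x; exact: psiK.
by apply: contra_neq hT => /(congr1 (preimage psi)); rewrite -comp_preimage phipsi.
Qed.

End Halfspaces.

Lemma Hxy_measurable {R : realType} {X : Type} (d : X -> X -> R) x y :
  measurable (Hxy d x y : set (HB d)).
Proof. by apply: sub_sigma_algebra; exists x, y. Qed.

Section Isometry.
Context {R : realType} {X : Type} (d : X -> X -> R) (phi : X -> X).
Hypothesis phi_iso : isometry d phi.

Lemma halfspace_preimageE (h : set X) : halfspace d (phi @^-1` h) <-> halfspace d h.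
Proof.
split; last exact: halfspace_preimage.
case: phi_iso => -[psi phiK psiK] iso.
have psi_iso : isometry d psi by split=> [|x y]; [exists phi | rewrite -iso !psiK].
have phipsi : phi \o psi = id by apply/funext => x; exact: psiK.
by move=> /(halfspace_preimage psi_iso); rewrite -comp_preimage phipsi.
Qed.

Lemma image_hsE (E : set (set X)) : image_hs phi E = preimage phi @^-1` E.
Proof.
case: phi_iso => -[psi phiK psiK] _.
apply/seteqP; split=> h /=.
  case=> h0 Eh0 <-; suff -> : phi @^-1` (phi @` h0) = h0 by [].
  by apply/seteqP; split=> x /=; [case=> y h0y /(can_inj phiK) <- | exists x].
move=> Eh; exists (phi @^-1` h) => //.
by rewrite image_preimage //; apply/seteqP; split=> // x _; exists (psi x).
Qed.

Lemma image_hs_Hxy x y : image_hs phi (Hxy d x y) = Hxy d (phi x) (phi y).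
Proof.
rewrite image_hsE; apply/seteqP; split=> h;
  by rewrite /Hxy /sigma_pt /setD /= halfspace_preimageE.
Qed.

Lemma image_hs_setI_Hxy (E : set (set X)) x y :
  exists a b, image_hs phi E `&` Hxy d x y = image_hs phi (E `&` Hxy d a b).
Proof.
case: phi_iso => -[psi _ psiK] _; exists (psi x), (psi y).
by rewrite -[in LHS](psiK x) -[in LHS](psiK y) -image_hs_Hxy !image_hsE.
Qed.

Lemma measurable_image_hs (E : set (HB d)) :
  measurable E -> measurable (image_hs phi E : set (HB d)).
Proof.
have mphi : measurable_fun setT (preimage phi : HB d -> HB d).
  apply: (@measurability _ _ (HB d) (HB d) _ _ (Hgen d)) => // _ [_ [x [y ->]] <-].
  by rewrite setTI -image_hsE image_hs_Hxy; exact: Hxy_measurable.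
by move=> mE; rewrite image_hsE -[X in measurable X]setTI; exact: mphi.
Qed.

End Isometry.

Section Orientation.
Context {R : realType} {X : Type} (d : X -> X -> R).

Definition orientation (A : set (set X)) : Prop :=
  (forall h k, A h -> A k -> h `&` k !=set0) /\
  (forall h, halfspace d h -> A h \/ A (~` h)).

Lemma ultrafilter_add (s : set (set X)) (h : set X) :
  ultrafilter d s -> halfspace d h -> (forall k, s k -> k `&` h !=set0) -> s h.
Proof.
move=> [[sH sI] smax] hh meet.
have sh_pi : pairwise_intersecting d (s `|` [set h]).
  split=> [k [/sH|->] //|k l [sk|->] [sl|->]].
  - exact: sI.
  - exact: meet.
  - by rewrite setIC; exact: meet.
  - by rewrite setIid; case: hh.
by rewrite -(smax _ sh_pi (@subsetUl _ s [set h])); right.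
Qed.

Lemma ultrafilter_orientation (s : set (set X)) : ultrafilter d s -> orientation s.
Proof.
move=> us; have [[_ sI] _] := us; split=> // h hh.
have [[k sk kh0]|disj] := pselect (exists2 k, s k & k `&` h = set0); [right|left].
  apply: ultrafilter_add (halfspaceC hh) _ => // l sl.
  have [x [lx kx]] := sI _ _ sl sk; exists x; split=> // hx.
  by have : (k `&` h) x by []; rewrite kh0.
apply: ultrafilter_add => // k sk; apply/set0P/eqP => kh0.
by apply: disj; exists k.
Qed.

Lemma orientationC (A : set (set X)) (h : set X) :
  orientation A -> halfspace d h -> A (~` h) <-> ~ A h.
Proof.
move=> [meet dich] hh; split=> [ACh Ah|nAh]; last by case: (dich _ hh).
by have [x [hx]] := meet _ _ Ah ACh.
Qed.

Lemma orientation_image_hs (phi : X -> X) (A : set (set X)) :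
  isometry d phi -> orientation A -> orientation (image_hs phi A).
Proof.
move=> iso [meet dich]; rewrite (image_hsE iso); split=> [h k Ah Ak|h hh].
  by have [x [hx kx]] := meet _ _ Ah Ak; exists (phi x).
by rewrite /= -preimage_setC; apply: dich; exact: halfspace_preimage.
Qed.

Lemma opposite_orientations_meet (A A' : set (set X)) (h k : set X) :
  orientation A -> orientation A' -> halfspace d h -> halfspace d k ->
  (A h <-> ~ A' h) -> (A k <-> ~ A' k) ->
  (A h <-> A k) -> h `&` k !=set0 /\ ~` h `&` ~` k !=set0.
Proof.
move=> oA oA' hh hk opp_h opp_k same; have [Ah|nAh] := pselect (A h).
  split; first exact: oA.1 _ _ Ah (same.1 Ah).
  apply: oA'.1.
  - by apply/(orientationC oA' hh); exact: opp_h.1.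
  - by apply/(orientationC oA' hk); exact: opp_k.1 (same.1 Ah).
have A'h : A' h by apply: contrapT => /opp_h.2.
have A'k : A' k by apply: contrapT => /opp_k.2 /same.2.
split; first exact: oA'.1.
apply: oA.1; first exact/(orientationC oA hh).
by apply/(orientationC oA hk) => /same.2.
Qed.

Lemma opposite_orientations_meetC (A A' : set (set X)) (h k : set X) :
  orientation A -> orientation A' -> halfspace d h -> halfspace d k ->
  (A h <-> ~ A' h) -> (A k <-> ~ A' k) ->
  ~ (A h <-> A k) -> h `&` ~` k !=set0 /\ ~` h `&` k !=set0.
Proof.
move=> oA oA' hh hk opp_h opp_k diff; rewrite -[in X in _ /\ X](setCK k).
apply: (opposite_orientations_meet oA oA' hh (halfspaceC hk) opp_h);
  rewrite (orientationC oA hk) ?(orientationC oA' hk);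
  by have [Ak|nAk] := pselect (A k); tauto.
Qed.

Lemma transverse_of_opposite_orientations (A A' B B' : set (set X)) (h k : set X) :
  orientation A -> orientation A' -> orientation B -> orientation B' ->
  halfspace d h -> halfspace d k ->
  (A h <-> ~ A' h) -> (A k <-> ~ A' k) -> (B h <-> ~ B' h) -> (B k <-> ~ B' k) ->
  (A h <-> A k) -> ~ (B h <-> B k) -> transverse h k.
Proof.
move=> oA oA' oB oB' hh hk oppAh oppAk oppBh oppBk same diff.
have [hk_meet Chk_meet] := opposite_orientations_meet oA oA' hh hk oppAh oppAk same.
have [hCk_meet Chk'_meet] := opposite_orientations_meetC oB oB' hh hk oppBh oppBk diff.
by split; [|split; [|split]].
Qed.

End Orientation.

(* Sign vectors only matter up to negation: [h] and [~` h] have complementary ones. *)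
Definition normalize (K : nat) (i0 : 'I_K) (v : {ffun 'I_K -> bool}) : {ffun 'I_K -> bool} :=
  [ffun l => v l == v i0].

Lemma normalize_eq K (i0 : 'I_K) v i j :
  (normalize i0 v i == normalize i0 v j) = (v i == v j).
Proof. by rewrite !ffunE; case: (v i) (v j) (v i0) => [] [] []. Qed.

Lemma normalize_neq K (i0 : 'I_K) v w : normalize i0 v != normalize i0 w ->
  (exists i, v i != w i) /\ (exists j, v j == w j).
Proof.
move=> vw; split; apply: contrapT => /forallNP vw_l; move: vw; apply/negP/negPn/eqP.
  by have -> // : v = w; apply/ffunP => l; apply/eqP/negPn/negP/vw_l.
apply/ffunP => l; rewrite !ffunE.
by have := vw_l l; have := vw_l i0; case: (v l) (w l) (v i0) (w i0) => [] [] [] [].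
Qed.

Lemma card_le_exp_separating K (C : {set {ffun 'I_K -> bool}}) :
  (forall i j, i != j -> exists2 c, c \in C & c i != c j) -> (K <= 2 ^ #|C|)%N.
Proof.
move=> sep; pose F i := [set c in C | c i]%SET.
have F_inj : injective F.
  move=> i j; apply: contra_eq => /sep [c cC]; apply: contra.
  by move=> /eqP /setP /(_ c); rewrite !inE cC /= => ->.
rewrite -[X in (X <= _)%N]card_ord -(card_imset _ F_inj) -card_powerset.
apply: subset_leq_card; apply/fintype.subsetP => _ /imsetP [i _ ->].
by rewrite powersetE; apply/fintype.subsetP => c; rewrite inE => /andP [].
Qed.

Section SignVectors.
Context {R : realType} {X : Type} (d : X -> X -> R) (N : nat).
Hypothesis rank_le : forall m (f : 'I_m -> set X), (forall i, halfspace d (f i)) ->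
  (forall i j, i != j -> transverse (f i) (f j)) -> (m <= N)%N.
Variables (K : nat) (U U' : 'I_K -> set (set X)).
Hypotheses (oU : forall i, orientation d (U i)) (oU' : forall i, orientation d (U' i)).

Definition opposite_at (h : set X) : Prop := forall l, U l h <-> ~ U' l h.

Definition signs (h : set X) : {ffun 'I_K -> bool} := [ffun l => `[< U l h >]].

Lemma transverse_of_normalized_signs (i0 : 'I_K) (h k : set X) :
  halfspace d h -> halfspace d k -> opposite_at h -> opposite_at k ->
  normalize i0 (signs h) != normalize i0 (signs k) -> transverse h k.
Proof.
move=> hh hk opph oppk /normalize_neq [[i si] [j sj]].
apply: (transverse_of_opposite_orientations (oU j) (oU' j) (oU i) (oU' i)) => //.
  by apply: asbool_eq_equiv; apply/eqP; rewrite !ffunE in sj.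
by move=> /asbool_equiv_eq e; rewrite !ffunE e eqxx in si.
Qed.

Lemma orientations_card_le :
  (forall i j, i != j ->
     exists h, [/\ halfspace d h, opposite_at h & ~ (U i h <-> U j h)]) ->
  (K <= 2 ^ N)%N.
Proof.
move=> sep; case: (posnP K) => [-> //|K_gt0]; pose i0 := Ordinal K_gt0.
pose good h := halfspace d h /\ opposite_at h.
pose C := [set c | `[< exists2 h, good h & normalize i0 (signs h) = c >]]%SET.
have /choice [rep repP] :
    forall c, exists h, c \in C -> good h /\ normalize i0 (signs h) = c.
  move=> c.
  have [|_] := boolP (c \in C); last by exists set0.
  by rewrite inE => /asboolP [h gh <-]; exists h.
have C_le : (#|C| <= N)%N.
  apply: (rank_le (f := fun i => rep (enum_val i))) => [i|i j ij].
    by have [[]] := repP _ (enum_valP i).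
  have [[hi oppi] si] := repP _ (enum_valP i).
  have [[hj oppj] sj] := repP _ (enum_valP j).
  apply: (transverse_of_normalized_signs (i0 := i0)) => //.
  by rewrite si sj (inj_eq enum_val_inj).
have C_sep : forall i j, i != j -> exists2 c, c \in C & c i != c j.
  move=> i j /sep [h [hh opph diff]]; exists (normalize i0 (signs h)).
    by rewrite inE; apply/asboolP; exists h.
  rewrite normalize_eq /signs !ffunE; apply/negP => /eqP e.
  by apply: diff; exact: asbool_eq_equiv e.
by apply: (leq_trans (card_le_exp_separating C_sep)); rewrite leq_exp2l.
Qed.

End SignVectors.

Section LocalMeasurability.
Context {R : realType} {X : Type} (d : X -> X -> R).
Implicit Types (A B C : set (set X)).

Lemma BhatI A B : Bhat d A -> Bhat d B -> Bhat d (A `&` B).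
Proof. by move=> mA mB x y; rewrite -[Hxy d x y]setIid setIACA; exact: measurableI. Qed.

Lemma BhatU A B : Bhat d A -> Bhat d B -> Bhat d (A `|` B).
Proof. by move=> mA mB x y; rewrite setIUl; exact: measurableU. Qed.

Lemma BhatC A : Bhat d A -> Bhat d (~` A).
Proof.
move=> mA x y; have -> : ~` A `&` Hxy d x y = Hxy d x y `\` (A `&` Hxy d x y).
  by apply/seteqP; split=> h /=; tauto.
by apply: measurableD; [exact: Hxy_measurable | exact: mA].
Qed.

Lemma Bhat_symdiff A B : Bhat d A -> Bhat d B -> Bhat d (symdiff A B).
Proof. by move=> mA mB; apply: BhatU; apply: BhatI => //; exact: BhatC. Qed.

Lemma Bhat_median3 A B C : Bhat d A -> Bhat d B -> Bhat d C -> Bhat d (median3 A B C).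
Proof. by move=> mA mB mC; do 2?apply: BhatU; exact: BhatI. Qed.

Lemma sigma_pt_setI_Hxy (a b x m : X) : mI d a b m -> mI d b x m -> mI d x a m ->
  sigma_pt d x `&` Hxy d a b = Hxy d a m.
Proof.
move=> mab mbx mxa; apply/seteqP; split=> h /=.
  case=> -[hh hx] [[_ hb] nha]; split=> //; split=> //.
  by case: hh => _ [_ [ch _]]; exact: (ch b x).
case=> -[hh hm] nha; have ha : ~ h a by move=> ha; apply: nha.
have [_ [_ [_ cCh]]] := hh.
have hx : h x by apply: contrapT => nhx; exact: (cCh x a nhx ha m mxa).
have hb : h b by apply: contrapT => nhb; exact: (cCh a b ha nhb m mab).
by do 2?split.
Qed.

Lemma Bhat_sigma_pt x : is_median_space d -> Bhat d (sigma_pt d x).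
Proof.
case=> _ med a b; have [m [[mab [mbx mxa]] _]] := med a b x.
by rewrite (sigma_pt_setI_Hxy mab mbx mxa); exact: Hxy_measurable.
Qed.

Lemma Bhat_roller_point (s : set (set X)) :
  is_median_space d -> roller_point d s -> Bhat d s.
Proof.
move=> md [_ [x sx]].
have -> : s = symdiff (symdiff s (sigma_pt d x)) (sigma_pt d x).
  apply/seteqP; split=> h; rewrite /symdiff /setD /setU /=;
  by have [|] := pselect (s h); have [|] := pselect (sigma_pt d x h); tauto.
by apply: Bhat_symdiff => //; exact: Bhat_sigma_pt.
Qed.

Lemma Bhat_image_hs (phi : X -> X) A :
  isometry d phi -> Bhat d A -> Bhat d (image_hs phi A).
Proof.
move=> iso mA x y; have [a [b ->]] := image_hs_setI_Hxy iso A x y.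
exact: measurable_image_hs.
Qed.

End LocalMeasurability.

Section LocalNullSets.
Context {R : realType} {X : Type} (d : X -> X -> R) (nu : {measure set (HB d) -> \bar R}).

Definition nuhat_negligible (E : set (set X)) : Prop := Bhat d E /\ nuhat_null nu E.

Lemma nuhat_negligibleU (A B : set (set X)) :
  nuhat_negligible A -> nuhat_negligible B -> nuhat_negligible (A `|` B).
Proof.
move=> [mA nA] [mB nB]; split=> [|x y]; first exact: BhatU.
by rewrite setIUl measureU0.
Qed.

Lemma nuhat_negligible_bigsetU (I : Type) (r : seq I) (P : pred I)
    (F : I -> set (set X)) :
  (forall i, P i -> nuhat_negligible (F i)) ->
  nuhat_negligible (\big[setU/set0]_(i <- r | P i) F i).
Proof.
move=> negF; apply: (big_ind nuhat_negligible) => //; last exact: nuhat_negligibleU.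
by split=> x y; rewrite set0I ?measure0.
Qed.

Lemma nuhat_nonnull_avoid (E B : set (set X)) :
  Bhat d E -> ~ nuhat_null nu E -> nuhat_negligible B ->
  exists h, [/\ halfspace d h, E h & ~ B h].
Proof.
move=> mE nE [mB nB]; apply: contrapT => none; apply: nE => x y.
apply: (subset_measure0 (mE x y) (mB x y)) (nB x y) => h [Eh Hh]; split=> //.
by apply: contrapT => nBh; apply: none; exists h; case: Hh => -[[]].
Qed.

Lemma nuhat_negligible_image_hs (phi : X -> X) (E : set (set X)) :
  canonical_measure nu -> isometry d phi -> nuhat_negligible E ->
  nuhat_negligible (image_hs phi E).
Proof.
move=> [_ nu_inv] iso [mE nE]; split=> [|x y]; first exact: Bhat_image_hs.
have [a [b ->]] := image_hs_setI_Hxy iso E x y.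
by rewrite nu_inv.
Qed.

Lemma roller_eq_sym (s t : set (set X)) : roller_eq nu s t -> roller_eq nu t s.
Proof. by rewrite /roller_eq /symdiff setUC. Qed.

Lemma lineal_ends_opposite (xi eta : set (set X)) :
  is_median_space d -> roller_point d xi -> roller_point d eta ->
  (forall x, roller_interval nu xi eta (sigma_pt d x)) ->
  nuhat_negligible (~` symdiff xi eta).
Proof.
move=> md rxi reta lin.
have mxi := Bhat_roller_point md rxi; have meta := Bhat_roller_point md reta.
have mM x : Bhat d (symdiff (median3 xi eta (sigma_pt d x)) (sigma_pt d x)).
  by apply: Bhat_symdiff; [apply: Bhat_median3 => // |]; exact: Bhat_sigma_pt.
split=> [|a b]; first by apply: BhatC; exact: Bhat_symdiff.
have [_ null_a] := lin a; have [_ null_b] := lin b.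
(* On H(a|b), the defect of [a \in I(xi, eta)] is xi `&` eta and that of
   [b \in I(xi, eta)] is the complement of xi `|` eta. *)
rewrite (_ : _ `&` _ =
    (symdiff (median3 xi eta (sigma_pt d a)) (sigma_pt d a) `&` Hxy d a b) `|`
    (symdiff (median3 xi eta (sigma_pt d b)) (sigma_pt d b) `&` Hxy d a b)).
  by rewrite measureU0 ?null_a ?null_b //; exact: mM.
apply/seteqP; split=> h; rewrite /symdiff /median3 /Hxy /setD /setI /setU /setC /=;
  have [|] := pselect (xi h); have [|] := pselect (eta h);
  have [|] := pselect (sigma_pt d a h); have [|] := pselect (sigma_pt d b h); tauto.
Qed.

End LocalNullSets.

Section LinealTranslates.
Context {R : realType} {X : Type} (d : X -> X -> R) (nu : {measure set (HB d) -> \bar R}).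
Hypotheses (d_median : is_median_space d) (nu_canonical : canonical_measure nu).
Variable N : nat.
Hypothesis rank_le : forall m (f : 'I_m -> set X), (forall i, halfspace d (f i)) ->
  (forall i j, i != j -> transverse (f i) (f j)) -> (m <= N)%N.
Variables xi eta : set (set X).
Hypotheses (xi_roller : roller_point d xi) (eta_roller : roller_point d eta).
Hypothesis lineal_xi_eta : forall x, roller_interval nu xi eta (sigma_pt d x).

Lemma translates_card_le K (phi : 'I_K -> X -> X) :
  (forall i, isometry d (phi i)) ->
  (forall i j, i != j -> ~ roller_eq nu (image_hs (phi i) xi) (image_hs (phi j) xi)) ->
  (K <= 2 ^ N)%N.
Proof.
move=> iso distinct.
pose U i := image_hs (phi i) xi; pose U' i := image_hs (phi i) eta.
have oU i : orientation d (U i).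
  exact/(orientation_image_hs (iso i))/ultrafilter_orientation/xi_roller.1.
have oU' i : orientation d (U' i).
  exact/(orientation_image_hs (iso i))/ultrafilter_orientation/eta_roller.1.
have mU i : Bhat d (U i) by apply: Bhat_image_hs; last exact: Bhat_roller_point.
pose bad := \big[setU/set0]_(l < K) ~` symdiff (U l) (U' l).
have bad_negligible : nuhat_negligible nu bad.
  apply: nuhat_negligible_bigsetU => l _.
  have := nuhat_negligible_image_hs nu_canonical (iso l)
    (lineal_ends_opposite d_median xi_roller eta_roller lineal_xi_eta).
  by rewrite /U /U' !(image_hsE (iso l)).
apply: (orientations_card_le rank_le oU oU') => i j ij.
have [h [hh Uij not_bad]] :=
  nuhat_nonnull_avoid (Bhat_symdiff (mU i) (mU j)) (distinct i j ij) bad_negligible.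
exists h; split=> // [l|].
  have : ~ (~` symdiff (U l) (U' l)) h.
    by move=> bad_l; apply: not_bad; rewrite /bad (bigD1 l) //; left.
  rewrite /symdiff /setD /setU /setC /=.
  by have [|] := pselect (U l h); have [|] := pselect (U' l h); tauto.
move: Uij; rewrite /symdiff /setD /setU /=.
by have [|] := pselect (U i h); have [|] := pselect (U j h); tauto.
Qed.

End LinealTranslates.

Section BoundedAntichains.
Variables (T : Type) (r : T -> T -> Prop).
Hypothesis r_sym : forall s t, r s t -> r t s.

Definition unrelated K (f : 'I_K -> T) : Prop := forall i j, i != j -> ~ r (f i) (f j).

Definition cons_ord K (f : 'I_K -> T) (t : T) : 'I_K.+1 -> T :=
  fun i => if unlift ord0 i is Some j then f j else t.

Lemma unrelated_cons K (f : 'I_K -> T) (t : T) : unrelated f -> (forall i, ~ r t (f i)) ->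
  unrelated (cons_ord f t).
Proof.
move=> uf tf i j; rewrite /cons_ord.
case: (unliftP ord0 i) => [i' ->|->]; case: (unliftP ord0 j) => [j' ->|->];
  rewrite ?liftK ?unlift_none ?eqxx //.
  by rewrite (inj_eq lift_inj); exact: uf.
by move=> _ /r_sym; exact: tf.
Qed.

Lemma bounded_antichain_cover (B : nat) :
  (forall K (f : 'I_K -> T), unrelated f -> (K <= B)%N) ->
  exists K (f : 'I_K -> T), forall t, exists i, r t (f i).
Proof.
move=> bound; pose P K := `[< exists f : 'I_K -> T, unrelated f >].
have P0 : exists K, P K.
  by exists 0%N; apply/asboolP; unshelve eexists; case=> // m; rewrite ltn0.
have P_le K : P K -> (K <= B)%N by move=> /asboolP [f uf]; exact: bound uf.
have [K] := ex_maxnP P0 P_le; rewrite /P => /asboolP [f uf] K_max.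
exists K, f => t; apply: contrapT => /forallNP tf.
have /K_max : P K.+1 by apply/asboolP; exists (cons_ord f t); exact: unrelated_cons.
by rewrite ltnn.
Qed.

End BoundedAntichains.

Lemma isometric_action_isometry {R : realType} {X G : Type} (d : X -> X -> R)
    (mul : G -> G -> G) (e : G) (inv : G -> G) (act : G -> X -> X) :
  is_group mul e inv -> isometric_action d mul e act -> forall g, isometry d (act g).
Proof.
move=> [_ [_ invK]] [act_e [act_mul act_iso]] g; split=> //.
have actK g' : cancel (act g') (act (inv g')) by move=> x; rewrite -act_mul invK act_e.
exists (act (inv g)) => // x.
by apply: (can_inj (actK (inv g))); rewrite actK.
Qed.

Theorem lemma6p1 (R : realType) (X : Type) (d : X -> X -> R)
  (nu : {measure set (HB d) -> \bar R}) :
  is_median_space d -> complete_metric d -> finite_rank d ->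
  canonical_measure nu -> lineal nu ->
  forall (G : Type) (mul : G -> G -> G) (e : G) (inv : G -> G) (act : G -> X -> X),
    is_group mul e inv -> isometric_action d mul e act ->
    roller_elementary nu act.
Proof.
move=> d_median _ [N rank_le] nu_canonical [xi [eta [xi_roller [eta_roller lin]]]]
  G mul e inv act G_group act_isometric.
have act_iso := isometric_action_isometry G_group act_isometric.
pose orbit_eq g g' := roller_eq nu (image_hs (act g) xi) (image_hs (act g') xi).
have orbit_eq_sym g g' : orbit_eq g g' -> orbit_eq g' g by exact: roller_eq_sym.
have orbit_card_le K (f : 'I_K -> G) : unrelated orbit_eq f -> (K <= 2 ^ N)%N.
  exact: (translates_card_le d_median nu_canonical rank_le xi_roller eta_roller lin).
have [K [f f_cover]] := bounded_antichain_cover orbit_eq_sym orbit_card_le.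
exists xi; split=> //; exists [seq image_hs (act (f i)) xi | i : 'I_K] => g.
have [i gi] := f_cover g; exists (image_hs (act (f i)) xi) => //.
by apply/mapP; exists i; rewrite ?mem_enum.
Qed.
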